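(* Let $D_2>0$, $k_3>0$, $S_2^{in}>0$, and let $\mu_2\in C^1(\mathbb R_+)$ satisfy $\mu_2(0)=0$, $\lim_{s\to\infty}\mu_2(s)=0$, and there exists $S_2^m>0$ with $\mu_2'>0$ on $(0,S_2^m)$ and $\mu_2'<0$ on $(S_2^m,\infty)$. Let $X_2^{1*}$ be a positive constant with $X_2^{1*}<S_2^{in}/k_3$. Define $f_2(x)=\mu_2(S_2^{in}-k_3x)$ on $[0,S_2^{in}/k_3]$, $g_2(x)=D_2(x-X_2^{1*})/x$ for $x>0$, and $x_1^m=(S_2^{in}-S_2^m)/k_3$. Then: \begin{enumerate} \item if $X_2^{1*}\ge x_1^m$, the equation $f_2(x)=g_2(x)$ has a unique solution in $(X_2^{1*},S_2^{in}/k_3)$; \item if $X_2^{1*}<x_1^m$, the equation $f_2(x)=g_2(x)$ has at least one solution in $(X_2^{1*},S_2^{in}/k_3)$; generically, there is an odd number of solutions in this interval. \end{enumerate} *)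

From Stdlib Require Import Reals Lra List.
From Coquelicot Require Import Coquelicot.
Open Scope R_scope.

Definition f2 (mu2 : R -> R) (S2in k3 : R) (x : R) : R := mu2 (S2in - k3 * x).

Definition g2 (D2 X21 : R) (x : R) : R := D2 * (x - X21) / x.

Definition x1m (S2in S2m k3 : R) : R := (S2in - S2m) / k3.

From Stdlib Require Import Reals Lra List.
From Coquelicot Require Import Coquelicot.
From Stdlib Require Import Classical Ranalysis5.
Open Scope R_scope.

(** The gap [f2 - g2] is positive at [X21], where [g2] vanishes and [mu2 > 0],
    and negative at [S2in / k3], where [f2 = mu2 0 = 0]; hence it has a zero.
    If [X21 >= x1m], the argument of [mu2] stays in the range [0 <= s <= S2m]
    where [mu2] increases, so [f2] decreases while [g2] increases and the zero
    is unique.  In general, when every zero is transversal the gap changes sign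
    at each of them.  Real induction along the interval carries the invariant
    "the zeros met so far are finitely many, and just to the left the gap has
    the sign of its left end value times [(-1) ^ #zeros]"; the overall sign
    change from positive to negative then forces an odd number of zeros. *)

Lemma Rmin_pos_le (x y : R) : 0 < x -> 0 < y -> 0 < Rmin x y /\ Rmin x y <= x /\ Rmin x y <= y.
Proof. intros Hx Hy; split; [apply Rmin_pos|split; [apply Rmin_l|apply Rmin_r]]; assumption. Qed.

Lemma Rmult_pos_same_sign (x y z : R) : 0 < x * z -> 0 < y * z -> 0 < x * y.
Proof. intros Hx Hy; nra. Qed.

Lemma Rmult_pos_sign_transfer (x y u v : R) : 0 < x * u * y -> 0 < v * u -> 0 < x * v * y.
Proof. intros Hu Hv; nra. Qed.

Lemma pow_m1_parity (n : nat) : (-1) ^ n = if Nat.odd n then -1 else 1.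
Proof.
  induction n as [|n IH]; [reflexivity|].
  rewrite <- tech_pow_Rmult, IH, Nat.odd_succ, <- Nat.negb_odd.
  destruct (Nat.odd n); simpl; ring.
Qed.

Lemma pow_m1_neg_odd (n : nat) : (-1) ^ n < 0 -> Nat.odd n = true.
Proof. rewrite pow_m1_parity; destruct (Nat.odd n); [reflexivity|lra]. Qed.

Lemma real_induction (P : R -> Prop) (a b : R) : a < b ->
  (exists d, 0 < d /\ forall y, a < y < a + d -> P y) ->
  (forall c, a < c <= b -> (forall y, a < y < c -> P y) -> P c) ->
  (forall c, a < c < b -> P c -> exists d, 0 < d /\ forall y, c < y < c + d -> P y) ->
  P b.
Proof.
  intros Hab [d0 [Hd0 Hbase]] Hlimit Hstep.
  set (S x := a < x <= b /\ forall y, a < y <= x -> P y).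
  assert (HS0 : S (a + Rmin d0 (b - a) / 2)).
  { destruct (Rmin_pos_le d0 (b - a)) as [Hm [Hm0 Hmb]]; [lra|lra|].
    split; [lra|]. intros y Hy. apply Hbase. lra. }
  destruct (completeness S) as [c [Hub Hlub]].
  - exists b. intros x [Hx _]. lra.
  - exists (a + Rmin d0 (b - a) / 2). exact HS0.
  - assert (Hac : a < c).
    { specialize (Hub _ HS0). pose proof (Rmin_pos d0 (b - a) Hd0 ltac:(lra)). lra. }
    assert (Hcb : c <= b) by (apply Hlub; intros x [Hx _]; lra).
    assert (Hbelow : forall y, a < y < c -> P y).
    { intros y Hy. apply NNPP. intros HnPy.
      assert (c <= y); [|lra].
      apply Hlub. intros x [Hx HPx]. apply Rnot_lt_le. intros Hyx.
      apply HnPy, HPx. lra. }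
    assert (HPc : P c) by (apply Hlimit; [lra|exact Hbelow]).
    destruct (Req_dec c b) as [<-|Hcb']; [exact HPc|exfalso].
    destruct (Hstep c ltac:(lra) HPc) as [d [Hd Habove]].
    destruct (Rmin_pos_le d (b - c)) as [Hm [Hmd Hmb]]; [lra|lra|].
    assert (HS : S (c + Rmin d (b - c) / 2)).
    { split; [lra|]. intros y Hy.
      destruct (Rtotal_order y c) as [Hyc|[->|Hyc]];
        [apply Hbelow|exact HPc|apply Habove]; lra. }
    specialize (Hub _ HS). lra.
Qed.

Lemma sign_persists (h : R -> R) (p : R) : continuous h p -> h p <> 0 ->
  exists del, 0 < del /\ forall y, Rabs (y - p) < del -> 0 < h y * h p.
Proof.
  intros Hc Hp. apply continuity_pt_filterlim in Hc.
  destruct (Hc (Rabs (h p)) (Rabs_pos_lt _ Hp)) as [del [Hdel Hnear]].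
  exists del. split; [lra|]. intros y Hy.
  destruct (Req_dec y p) as [->|Hyp]; [nra|].
  assert (Hclose : Rabs (h y - h p) < Rabs (h p)).
  { apply (Hnear y). split; [split; [exact I|congruence]|exact Hy]. }
  revert Hclose. split_Rabs; nra.
Qed.

Lemma sign_near_simple_zero (h : R -> R) (p d : R) :
  is_derive h p d -> h p = 0 -> d <> 0 ->
  exists del, 0 < del /\ forall y, 0 < Rabs (y - p) < del -> 0 < h y * (y - p) * d.
Proof.
  intros Hd Hp Hd0. apply is_derive_Reals in Hd.
  destruct (Hd (Rabs d) (Rabs_pos_lt _ Hd0)) as [del Hdel].
  exists del. split; [apply cond_pos|]. intros y [Hy0 Hy].
  assert (Hne : y - p <> 0) by (intros E; rewrite E, Rabs_R0 in Hy0; lra).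
  specialize (Hdel (y - p) Hne Hy).
  replace (p + (y - p)) with y in Hdel by ring. rewrite Hp, Rminus_0_r in Hdel.
  set (q := h y / (y - p)) in Hdel.
  assert (Hq : 0 < q * d) by (revert Hdel; split_Rabs; nra).
  replace (h y) with (q * (y - p)) by (unfold q; field; exact Hne).
  assert (0 < (y - p) * (y - p)) by (apply Rsqr_pos_lt, Hne).
  nra.
Qed.

Definition lists_zeros (h : R -> R) (a c : R) (l : list R) : Prop :=
  NoDup l /\ forall x, In x l <-> a < x < c /\ h x = 0.

Lemma lists_zeros_extend (h : R -> R) (a c y : R) (l : list R) :
  lists_zeros h a c l -> c <= y -> (forall x, c <= x < y -> h x <> 0) ->
  lists_zeros h a y l.
Proof.
  intros [Hnd Hl] Hcy Hnz. split; [exact Hnd|]. intros x. rewrite Hl.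
  split; intros [Hx Hx0]; split; try lra; try exact Hx0.
  split; [lra|]. apply Rnot_le_lt. intros Hcx. apply (Hnz x); [lra|exact Hx0].
Qed.

Lemma lists_zeros_cons (h : R -> R) (a c y : R) (l : list R) :
  lists_zeros h a c l -> a < c < y -> h c = 0 -> (forall x, c < x < y -> h x <> 0) ->
  lists_zeros h a y (c :: l).
Proof.
  intros [Hnd Hl] Hcy Hc Hnz. split.
  - constructor; [|exact Hnd]. rewrite Hl. lra.
  - intros x. simpl. rewrite Hl. split.
    + intros [<-|[Hx Hx0]]; split; (lra || assumption).
    + intros [Hx Hx0]. destruct (Rtotal_order x c) as [Hxc|[->|Hxc]].
      * right. split; [lra|exact Hx0].
      * left. reflexivity.
      * exfalso. apply (Hnz x); [lra|exact Hx0].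
Qed.

Definition zero_parity (h : R -> R) (a c : R) : Prop :=
  exists l, lists_zeros h a c l /\
    exists eps, 0 < eps /\ forall y, c - eps < y < c -> 0 < h a * h y * (-1) ^ length l.

Section TransversalZeros.

Variables (h dh : R -> R) (a b : R).
Hypothesis hab : a < b.
Hypothesis h_derive : forall x, a <= x <= b -> is_derive h x (dh x).
Hypothesis h_transversal : forall x, a < x < b -> h x = 0 -> dh x <> 0.
Hypothesis ha : h a <> 0.
Hypothesis hb : h b <> 0.

Lemma sign_persists_in (c : R) : a <= c <= b -> h c <> 0 ->
  exists del, 0 < del /\ forall y, Rabs (y - c) < del -> 0 < h y * h c.
Proof.
  intros Hc. apply sign_persists, (@ex_derive_continuous R_AbsRing R_NormedModule).
  exists (dh c). apply h_derive, Hc.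
Qed.

Lemma zero_parity_start : exists d, 0 < d /\ forall y, a < y < a + d -> zero_parity h a y.
Proof.
  destruct (sign_persists_in a) as [del [Hdel Hnear]]; [lra|exact ha|].
  exists del. split; [exact Hdel|]. intros y Hy. exists nil. split.
  - split; [constructor|]. intros x. simpl. split; [tauto|]. intros [Hx Hx0].
    specialize (Hnear x ltac:(split_Rabs; lra)). rewrite Hx0 in Hnear. lra.
  - exists (y - a). split; [lra|]. intros z Hz. simpl.
    specialize (Hnear z ltac:(split_Rabs; lra)). nra.
Qed.

Lemma left_sign (c : R) : a < c <= b ->
  exists del s, 0 < del /\ forall y, c - del < y < c -> 0 < h y * s.
Proof.
  intros Hc. destruct (Req_dec (h c) 0) as [Hc0|Hc0].
  - assert (Hcb : c < b) by (destruct (Req_dec c b) as [->|]; [contradiction|lra]).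
    destruct (sign_near_simple_zero h c (dh c)) as [del [Hdel Hnear]];
      [apply h_derive; lra|exact Hc0|apply h_transversal; [lra|exact Hc0]|].
    exists del, (- dh c). split; [exact Hdel|]. intros y Hy.
    specialize (Hnear y ltac:(split_Rabs; lra)). nra.
  - destruct (sign_persists_in c) as [del [Hdel Hnear]]; [lra|exact Hc0|].
    exists del, (h c). split; [exact Hdel|]. intros y Hy. apply Hnear. split_Rabs; lra.
Qed.

Lemma zero_parity_limit (c : R) : a < c <= b ->
  (forall y, a < y < c -> zero_parity h a y) -> zero_parity h a c.
Proof.
  intros Hc Hbelow. destruct (left_sign c Hc) as [del [s [Hdel Hs]]].
  destruct (Rmin_pos_le del (c - a)) as [Hm [Hmdel Hmc]]; [lra|lra|].
  set (m := Rmin del (c - a)) in *.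
  destruct (Hbelow (c - m / 2)) as [l [Hl [eps [Heps Hsign]]]]; [lra|].
  exists l. split.
  - apply (lists_zeros_extend h a (c - m / 2)); [exact Hl|lra|].
    intros x Hx Hx0. specialize (Hs x ltac:(lra)). rewrite Hx0 in Hs. lra.
  - exists (m / 2). split; [lra|]. intros y Hy.
    destruct (Rmin_pos_le eps (m / 2)) as [He [Heeps Hem]]; [lra|lra|].
    set (y0 := c - m / 2 - Rmin eps (m / 2) / 2).
    apply (Rmult_pos_sign_transfer _ _ (h y0)); [apply Hsign; unfold y0; lra|].
    apply (Rmult_pos_same_sign _ _ s); apply Hs; unfold y0; lra.
Qed.

Lemma zero_parity_step (c : R) : a < c < b -> zero_parity h a c ->
  exists d, 0 < d /\ forall y, c < y < c + d -> zero_parity h a y.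
Proof.
  intros Hc [l [Hl [eps [Heps Hsign]]]]. destruct (Req_dec (h c) 0) as [Hc0|Hc0].
  - destruct (sign_near_simple_zero h c (dh c)) as [del [Hdel Hnear]];
      [apply h_derive; lra|exact Hc0|apply h_transversal; [lra|exact Hc0]|].
    exists del. split; [exact Hdel|]. intros y Hy. exists (c :: l). split.
    + apply lists_zeros_cons; [exact Hl|lra|exact Hc0|].
      intros x Hx Hx0. specialize (Hnear x ltac:(split_Rabs; lra)). rewrite Hx0 in Hnear. lra.
    + exists (y - c). split; [lra|]. intros z Hz.
      destruct (Rmin_pos_le eps del) as [Hm [Hmeps Hmdel]]; [lra|lra|].
      set (y0 := c - Rmin eps del / 2).
      assert (Hright : 0 < h z * dh c).
      { specialize (Hnear z ltac:(split_Rabs; lra)). nra. }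
      assert (Hleft : 0 < - h y0 * dh c).
      { specialize (Hnear y0 ltac:(unfold y0; split_Rabs; lra)). unfold y0 in *. nra. }
      simpl length. simpl pow. replace (h a * h z * (-1 * (-1) ^ length l))
        with (h a * - h z * (-1) ^ length l) by ring.
      apply (Rmult_pos_sign_transfer _ _ (h y0)); [apply Hsign; unfold y0; lra|].
      replace (- h z * h y0) with (h z * - h y0) by ring.
      exact (Rmult_pos_same_sign _ _ _ Hright Hleft).
  - destruct (sign_persists_in c) as [del [Hdel Hnear]]; [lra|exact Hc0|].
    exists del. split; [exact Hdel|]. intros y Hy. exists l. split.
    + apply (lists_zeros_extend h a c); [exact Hl|lra|].
      intros x Hx Hx0. specialize (Hnear x ltac:(split_Rabs; lra)). rewrite Hx0 in Hnear. lra.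
    + exists (y - c). split; [lra|]. intros z Hz.
      destruct (Rmin_pos_le eps del) as [Hm [Hmeps Hmdel]]; [lra|lra|].
      set (y0 := c - Rmin eps del / 2).
      apply (Rmult_pos_sign_transfer _ _ (h y0)); [apply Hsign; unfold y0; lra|].
      apply (Rmult_pos_same_sign _ _ (h c)); apply Hnear; unfold y0; split_Rabs; lra.
Qed.

Lemma transversal_zeros_parity :
  exists l, lists_zeros h a b l /\ 0 < h a * h b * (-1) ^ length l.
Proof.
  destruct (real_induction (zero_parity h a) a b hab zero_parity_start
              zero_parity_limit zero_parity_step) as [l [Hl [eps [Heps Hsign]]]].
  exists l. split; [exact Hl|].
  destruct (sign_persists_in b) as [del [Hdel Hnear]]; [lra|exact hb|].
  destruct (Rmin_pos_le eps del) as [Hm [Hmeps Hmdel]]; [lra|lra|].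
  set (y0 := b - Rmin eps del / 2).
  apply (Rmult_pos_sign_transfer _ _ (h y0)); [apply Hsign; unfold y0; lra|].
  rewrite Rmult_comm. apply Hnear. unfold y0. split_Rabs; lra.
Qed.

End TransversalZeros.

Corollary transversal_zeros_odd (h dh : R -> R) (a b : R) : a < b ->
  (forall x, a <= x <= b -> is_derive h x (dh x)) ->
  (forall x, a < x < b -> h x = 0 -> dh x <> 0) ->
  0 < h a -> h b < 0 ->
  exists l, lists_zeros h a b l /\ Nat.odd (length l) = true.
Proof.
  intros Hab Hd Ht Ha Hb.
  destruct (transversal_zeros_parity h dh a b) as [l [Hl Hsign]]; try assumption; try lra.
  exists l. split; [exact Hl|]. apply pow_m1_neg_odd.
  assert (h a * h b < 0) by nra. nra.
Qed.

Lemma zero_of_sign_change (h : R -> R) (a b : R) : a < b ->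
  (forall x, a <= x <= b -> continuous h x) -> 0 < h a -> h b < 0 ->
  exists x, a < x < b /\ h x = 0.
Proof.
  intros Hab Hc Ha Hb.
  destruct (IVT_interv (fun x => - h x) a b) as [x [Hx Hx0]]; [|lra|lra|lra|].
  - intros x Hx. apply continuity_pt_opp, continuity_pt_filterlim, Hc, Hx.
  - exists x. destruct (Req_dec x a) as [->|Hxa]; [lra|].
    destruct (Req_dec x b) as [->|Hxb]; [lra|]. split; lra.
Qed.

Section Unimodal.

Variables (mu : R -> R) (Sm : R).
Hypothesis mu_derive : forall s, 0 <= s -> ex_derive mu s.
Hypothesis mu_incr : forall s, 0 < s < Sm -> Derive mu s > 0.
Hypothesis mu_decr : forall s, Sm < s -> Derive mu s < 0.
Hypothesis mu0 : mu 0 = 0.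
Hypothesis mu_lim : is_lim mu p_infty 0.

Lemma mu_mvt (s1 s2 : R) : 0 <= s1 < s2 ->
  exists c, mu s2 - mu s1 = Derive mu c * (s2 - s1) /\ s1 < c < s2.
Proof.
  intros Hs. apply MVT_cor2; [lra|]. intros c Hc.
  apply is_derive_Reals, Derive_correct, mu_derive. lra.
Qed.

Lemma mu_strict_incr (s1 s2 : R) : 0 <= s1 < s2 -> s2 <= Sm -> mu s1 < mu s2.
Proof.
  intros Hs HSm. destruct (mu_mvt s1 s2 Hs) as [c [Hmvt Hc]].
  assert (Derive mu c > 0) by (apply mu_incr; lra). nra.
Qed.

Lemma mu_strict_decr (s1 s2 : R) : 0 <= s1 -> Sm <= s1 < s2 -> mu s2 < mu s1.
Proof.
  intros Hs1 Hs. destruct (mu_mvt s1 s2) as [c [Hmvt Hc]]; [lra|].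
  assert (Derive mu c < 0) by (apply mu_decr; lra). nra.
Qed.

Lemma mu_pos (s : R) : 0 < s -> 0 < mu s.
Proof.
  intros Hs. destruct (Rle_or_lt s Sm) as [HsSm|HsSm].
  - rewrite <- mu0. apply mu_strict_incr; lra.
  - assert (Hlim : Rbar_le 0 (mu (s + 1))).
    { apply (is_lim_le_loc mu (fun _ => mu (s + 1)) p_infty);
        [|exact mu_lim|apply is_lim_const].
      exists (s + 1). intros t Ht. left. apply mu_strict_decr; lra. }
    simpl in Hlim. pose proof (mu_strict_decr s (s + 1)). lra.
Qed.

End Unimodal.

Lemma g2_strict_incr (D2 X21 x1 x2 : R) : 0 < D2 -> 0 < X21 -> 0 < x1 < x2 ->
  g2 D2 X21 x1 < g2 D2 X21 x2.
Proof.
  intros HD HX Hx. unfold g2.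
  replace (D2 * (x1 - X21) / x1) with (D2 - D2 * X21 * / x1) by (field; lra).
  replace (D2 * (x2 - X21) / x2) with (D2 - D2 * X21 * / x2) by (field; lra).
  assert (/ x2 < / x1) by (apply Rinv_lt_contravar; nra).
  assert (0 < D2 * X21) by nra. nra.
Qed.

Definition equilibrium_gap (mu2 : R -> R) (S2in k3 D2 X21 : R) (x : R) : R :=
  f2 mu2 S2in k3 x - g2 D2 X21 x.

Lemma equilibrium_gap_zero (mu2 : R -> R) (S2in k3 D2 X21 x : R) :
  equilibrium_gap mu2 S2in k3 D2 X21 x = 0 <-> f2 mu2 S2in k3 x = g2 D2 X21 x.
Proof. unfold equilibrium_gap. lra. Qed.

Lemma strict_decr_zero_unique (h : R -> R) (a b x y : R) :
  (forall x1 x2, a < x1 < x2 -> x2 < b -> h x2 < h x1) ->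
  a < x < b -> a < y < b -> h x = 0 -> h y = 0 -> x = y.
Proof.
  intros Hdecr Hx Hy Hx0 Hy0.
  destruct (Rtotal_order x y) as [Hxy|[Hxy|Hxy]]; [|exact Hxy|];
    [specialize (Hdecr x y)|specialize (Hdecr y x)]; lra.
Qed.

Section EquilibriumGap.

Variables (D2 k3 S2in S2m X21 : R) (mu2 : R -> R).
Hypothesis hD2 : 0 < D2.
Hypothesis hk3 : 0 < k3.
Hypothesis hmu_der : forall s, 0 <= s -> ex_derive mu2 s.
Hypothesis hmu0 : mu2 0 = 0.
Hypothesis hmu_lim : is_lim mu2 p_infty 0.
Hypothesis hinc : forall s, 0 < s < S2m -> Derive mu2 s > 0.
Hypothesis hdec : forall s, S2m < s -> Derive mu2 s < 0.
Hypothesis hX : 0 < X21.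
Hypothesis hXlt : X21 < S2in / k3.

Local Notation gap := (equilibrium_gap mu2 S2in k3 D2 X21).

Let k3_div_cancel : k3 * (S2in / k3) = S2in.
Proof. field. lra. Qed.

Lemma equilibrium_gap_derive (x : R) : X21 <= x <= S2in / k3 ->
  is_derive gap x (Derive (f2 mu2 S2in k3) x - Derive (g2 D2 X21) x).
Proof.
  intros Hx. apply (is_derive_minus (f2 mu2 S2in k3) (g2 D2 X21)); apply Derive_correct.
  - apply (ex_derive_comp mu2 (fun x => S2in - k3 * x)); [|auto_derive; exact I].
    apply hmu_der. nra.
  - unfold g2. auto_derive. lra.
Qed.

Lemma equilibrium_gap_pos_left : 0 < gap X21.
Proof.
  unfold equilibrium_gap, f2, g2. rewrite Rminus_diag, Rmult_0_r, Rdiv_0_l, Rminus_0_r.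
  apply (mu_pos mu2 S2m); try assumption. nra.
Qed.

Lemma equilibrium_gap_neg_right : gap (S2in / k3) < 0.
Proof.
  unfold equilibrium_gap, f2, g2. rewrite k3_div_cancel, Rminus_diag, hmu0.
  assert (0 < D2 * (S2in / k3 - X21) / (S2in / k3)); [|lra].
  apply Rdiv_lt_0_compat; nra.
Qed.

Lemma equilibrium_gap_zero_exists : exists x, X21 < x < S2in / k3 /\ gap x = 0.
Proof.
  apply zero_of_sign_change;
    [exact hXlt| |exact equilibrium_gap_pos_left|exact equilibrium_gap_neg_right].
  intros x Hx. apply (@ex_derive_continuous R_AbsRing R_NormedModule).
  eexists. apply equilibrium_gap_derive, Hx.
Qed.

Lemma equilibrium_gap_strict_decr : X21 >= x1m S2in S2m k3 ->
  forall x1 x2, X21 < x1 < x2 -> x2 < S2in / k3 -> gap x2 < gap x1.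
Proof.
  unfold x1m. intros Hge x1 x2 Hx12 Hx2.
  assert (Hs : S2in - k3 * X21 <= S2m).
  { assert (k3 * ((S2in - S2m) / k3) = S2in - S2m) by (field; lra). nra. }
  assert (f2 mu2 S2in k3 x2 < f2 mu2 S2in k3 x1).
  { apply (mu_strict_incr mu2 S2m); try assumption; nra. }
  assert (g2 D2 X21 x1 < g2 D2 X21 x2) by (apply g2_strict_incr; lra).
  unfold equilibrium_gap. lra.
Qed.

End EquilibriumGap.

Theorem lemmaA2 (D2 k3 S2in S2m X21 : R) (mu2 : R -> R)
  (hD2 : 0 < D2) (hk3 : 0 < k3) (hS2in : 0 < S2in)
  (* mu2 is C^1 on R_+ *)
  (hmu_der : forall s, 0 <= s -> ex_derive mu2 s)
  (hmu_C1 : forall s, 0 <= s -> continuous (Derive mu2) s)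
  (hmu0 : mu2 0 = 0)
  (hmu_lim : is_lim mu2 p_infty 0)
  (hS2m : 0 < S2m)
  (hinc : forall s, 0 < s < S2m -> Derive mu2 s > 0)
  (hdec : forall s, S2m < s -> Derive mu2 s < 0)
  (hX : 0 < X21) (hXlt : X21 < S2in / k3) :
  (X21 >= x1m S2in S2m k3 ->
     exists! x, X21 < x < S2in / k3 /\ f2 mu2 S2in k3 x = g2 D2 X21 x)
  /\
  (X21 < x1m S2in S2m k3 ->
     (exists x, X21 < x < S2in / k3 /\ f2 mu2 S2in k3 x = g2 D2 X21 x)
     /\
     (* "generically": when every solution is nondegenerate (transversal) *)
     ((forall x, X21 < x < S2in / k3 -> f2 mu2 S2in k3 x = g2 D2 X21 x ->
          Derive (f2 mu2 S2in k3) x <> Derive (g2 D2 X21) x) ->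
      exists l : list R, NoDup l /\
        (forall x, In x l <-> (X21 < x < S2in / k3 /\ f2 mu2 S2in k3 x = g2 D2 X21 x)) /\
        Nat.odd (length l) = true)).
Proof.
  pose proof (equilibrium_gap_zero mu2 S2in k3 D2 X21) as gap_zero.
  assert (Hex : exists x, X21 < x < S2in / k3 /\ f2 mu2 S2in k3 x = g2 D2 X21 x).
  { destruct (equilibrium_gap_zero_exists D2 k3 S2in S2m X21 mu2) as [x [Hx Hx0]];
      try assumption.
    exists x. split; [exact Hx|apply gap_zero, Hx0]. }
  split.
  - intros Hge. destruct Hex as [x Hx]. exists x. split; [exact Hx|].
    intros y [Hy Hy0]. apply (strict_decr_zero_unique (equilibrium_gap mu2 S2in k3 D2 X21)
      X21 (S2in / k3)); try apply gap_zero; try tauto.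
    apply (equilibrium_gap_strict_decr D2 k3 S2in S2m); assumption.
  - intros Hlt. split; [exact Hex|]. intros Htr.
    destruct (transversal_zeros_odd (equilibrium_gap mu2 S2in k3 D2 X21)
      (fun x => Derive (f2 mu2 S2in k3) x - Derive (g2 D2 X21) x) X21 (S2in / k3))
      as [l [[Hnd Hl] Hodd]].
    + exact hXlt.
    + apply equilibrium_gap_derive; assumption.
    + intros x Hx Hx0 Hdx. apply (Htr x Hx); [apply gap_zero, Hx0|lra].
    + apply (equilibrium_gap_pos_left D2 k3 S2in S2m); assumption.
    + apply (equilibrium_gap_neg_right D2 k3 S2in); assumption.
    + exists l. split; [exact Hnd|split; [|exact Hodd]].
      intros x. rewrite Hl, gap_zero. reflexivity.
Qed.
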